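(* Let $\mu$ be a PU-monotone. If $A\in H_n$ and $B\in H_k$ are both neither positive semidefinite nor negative semidefinite and satisfy $\|A_+\|_\infty=\|B_+\|_\infty$ and $\|A_-\|_\infty=\|B_-\|_\infty$, then $\mu(A)=\mu(B)$. That is, restricted to such non-definite matrices, $\mu(A)$ is a function of $(\|A_+\|_\infty,\|A_-\|_\infty)$.
   Context: $H_n$ denotes the $n\times n$ complex Hermitian matrices. A linear map $\Phi:H_n\to H_k$ is PU if it maps positive semidefinite matrices to positive semidefinite matrices and $\Phi(\mathbb{1})=\mathbb{1}$. A function $\mu:\bigcup_{n\in\mathbb N}H_n\to\mathbb R$ is a PU-monotone if $\mu(\Phi(A))\leq\mu(A)$ for all $n,k$, all PU maps $\Phi:H_n\to H_k$ and all $A\in H_n$. Every $A$ decomposes uniquely as $A=A_+-A_-$ with $A_\pm$ positive semidefinite and $A_+A_-=0$. $\|\cdot\|_\infty$ is the operator norm. *)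

From HB Require Import structures.
From mathcomp Require Import all_boot all_order all_algebra.
From mathcomp Require Import classical_sets reals.
From mathcomp.real_closed Require Import complex.
Set Implicit Arguments. Unset Strict Implicit. Unset Printing Implicit Defensive.
Import GRing.Theory Num.Theory.
Local Open Scope ring_scope.

Definition adjmx (R : realType) (m n : nat) (A : 'M[R[i]]_(m, n)) : 'M[R[i]]_(n, m) :=
  map_mx Num.conj A^T.

Definition is_herm (R : realType) (n : nat) (A : 'M[R[i]]_n) : Prop :=
  adjmx A = A.

Definition psdmx (R : realType) (n : nat) (A : 'M[R[i]]_n) : Prop :=
  is_herm A /\ forall v : 'cV[R[i]]_n, 0 <= (adjmx v *m A *m v) 0 0.

Definition vnorm (R : realType) (n : nat) (v : 'cV[R[i]]_n) : R :=
  Num.sqrt (complex.Re ((adjmx v *m v) 0 0)).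

Definition opnorm (R : realType) (n : nat) (A : 'M[R[i]]_n) : R :=
  sup [set r : R | exists v : 'cV[R[i]]_n, vnorm v <= 1 /\ r = vnorm (A *m v)].

(* Phi : H_n -> H_k is a (real-)linear positive unital map; only its values on
   H_n matter. *)
Definition is_PU (R : realType) (n k : nat) (Phi : 'M[R[i]]_n -> 'M[R[i]]_k) : Prop :=
  [/\ (forall A, is_herm A -> is_herm (Phi A)),
      (forall (a b : R) (A B : 'M[R[i]]_n), is_herm A -> is_herm B ->
         Phi ((a%:C)%C *: A + (b%:C)%C *: B) = (a%:C)%C *: Phi A + (b%:C)%C *: Phi B),
      (forall A, psdmx A -> psdmx (Phi A)) &
      Phi 1%:M = 1%:M].

(* mu : \bigcup_{n >= 1} H_n -> R (values on non-Hermitian matrices are irrelevant) *)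
Definition PU_monotone (R : realType) (mu : forall n : nat, 'M[R[i]]_n -> R) : Prop :=
  forall (n k : nat) (Phi : 'M[R[i]]_n -> 'M[R[i]]_k), (0 < n)%N -> (0 < k)%N ->
    is_PU Phi -> forall A, is_herm A -> mu k (Phi A) <= mu n A.

From HB Require Import structures.
From mathcomp Require Import all_boot all_order all_algebra.
From mathcomp Require Import classical_sets reals.
From mathcomp.real_closed Require Import complex.
From mathcomp Require Import sesquilinear spectral.
From mathcomp.algebra_tactics Require Import ring.
Import GRing.Theory Num.Theory Order.TTheory.
Set Implicit Arguments. Unset Strict Implicit. Unset Printing Implicit Defensive.
Local Open Scope ring_scope.
Local Open Scope complex_scope.

(* Let a = ||A_+|| and b = ||A_-||.  Since A is neither positive
   nor negative semidefinite, a > 0 and b > 0.  Both directions of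
   mu(A) = mu(diag(a, -b)) come from PU maps between H_n and H_2:
   - compression X |-> diag(u^* X u, w^* X w), where u and w are unit
     eigenvectors of A_+ and A_- for their top eigenvalues a and b; because
     A_+ A_- = 0 they are eigenvectors of A for a and -b, so A |-> diag(a, -b);
   - expansion Y |-> Y_00 E + Y_11 F with the PSD resolution of the identity
     E = (A + b) / (a + b), F = (a - A) / (a + b), which maps diag(a, -b) to A. *)

Section Hermitian.
Variable R : realType.
Local Notation C := R[i].

Lemma adjmxK m n (A : 'M[C]_(m, n)) : adjmx (adjmx A) = A.
Proof. by apply/matrixP=> i j; rewrite !mxE conjCK. Qed.

Lemma adjmxM m n p (A : 'M[C]_(m, n)) (B : 'M[C]_(n, p)) :
  adjmx (A *m B) = adjmx B *m adjmx A.
Proof. by rewrite /adjmx trmx_mul map_mxM. Qed.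

Lemma adjmxD m n (A B : 'M[C]_(m, n)) : adjmx (A + B) = adjmx A + adjmx B.
Proof. by apply/matrixP=> i j; rewrite !mxE rmorphD. Qed.

Lemma adjmxN m n (A : 'M[C]_(m, n)) : adjmx (- A) = - adjmx A.
Proof. by apply/matrixP=> i j; rewrite !mxE rmorphN. Qed.

Lemma adjmxZ m n c (A : 'M[C]_(m, n)) : adjmx (c *: A) = Num.conj c *: adjmx A.
Proof. by apply/matrixP=> i j; rewrite !mxE rmorphM. Qed.

Lemma adjmx0 m n : adjmx (0 : 'M[C]_(m, n)) = 0.
Proof. by apply/matrixP=> i j; rewrite !mxE rmorph0. Qed.

Lemma herm1 n : is_herm (1%:M : 'M[C]_n).
Proof.
apply/matrixP=> i j; rewrite !mxE eq_sym.
by case: eqP; rewrite ?rmorph1 ?rmorph0.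
Qed.

Lemma hermD n (X Y : 'M[C]_n) : is_herm X -> is_herm Y -> is_herm (X + Y).
Proof. by move=> hX hY; rewrite /is_herm adjmxD hX hY. Qed.

Lemma hermN n (X : 'M[C]_n) : is_herm X -> is_herm (- X).
Proof. by move=> hX; rewrite /is_herm adjmxN hX. Qed.

Lemma hermZ n (c : C) (X : 'M[C]_n) :
  Num.conj c = c -> is_herm X -> is_herm (c *: X).
Proof. by move=> hc hX; rewrite /is_herm adjmxZ hc hX. Qed.

Lemma psd_herm n (X : 'M[C]_n) : psdmx X -> is_herm X.
Proof. by case. Qed.

Definition qf n (v : 'cV[C]_n) (X : 'M[C]_n) : C := (adjmx v *m X *m v) 0 0.

Lemma qfD n (v : 'cV[C]_n) (X Y : 'M[C]_n) : qf v (X + Y) = qf v X + qf v Y.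
Proof. by rewrite /qf mulmxDr mulmxDl mxE. Qed.

Lemma qfN n (v : 'cV[C]_n) (X : 'M[C]_n) : qf v (- X) = - qf v X.
Proof. by rewrite /qf mulmxN mulNmx mxE. Qed.

Lemma qfB n (v : 'cV[C]_n) (X Y : 'M[C]_n) : qf v (X - Y) = qf v X - qf v Y.
Proof. by rewrite qfD qfN. Qed.

Lemma qfZ n (v : 'cV[C]_n) c (X : 'M[C]_n) : qf v (c *: X) = c * qf v X.
Proof. by rewrite /qf -scalemxAr -scalemxAl mxE. Qed.

Lemma qf_herm n (v : 'cV[C]_n) (X : 'M[C]_n) :
  is_herm X -> Num.conj (qf v X) = qf v X.
Proof.
move=> hX; have -> : Num.conj (qf v X) = adjmx (adjmx v *m X *m v) 0 0.
  by rewrite /qf /adjmx !mxE.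
by rewrite !adjmxM adjmxK hX mulmxA.
Qed.

Lemma qf_conjmx n (U X : 'M[C]_n) (v : 'cV[C]_n) :
  qf v (U *m X *m adjmx U) = qf (adjmx U *m v) X.
Proof. by rewrite /qf adjmxM adjmxK !mulmxA. Qed.

Lemma qf_eigen n (X : 'M[C]_n) (u : 'cV[C]_n) c :
  X *m u = c *: u -> qf u X = c * qf u 1%:M.
Proof. by move=> Xu; rewrite /qf -mulmxA Xu -scalemxAr mxE mulmx1. Qed.

Lemma qf_diag n (w : 'cV[C]_n) (e : 'rV[C]_n) :
  qf w (diag_mx e) = \sum_i e 0 i * (Num.conj (w i 0) * w i 0).
Proof.
rewrite /qf mul_mx_diag mxE; apply: eq_bigr => i _; rewrite !mxE.
by rewrite mulrA [_ * e 0 i]mulrC.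
Qed.

Lemma qf_delta n (i : 'I_n) (X : 'M[C]_n) : qf (delta_mx i 0) X = X i i.
Proof.
rewrite /qf mxE (bigD1 i) //= big1 => [|j /negbTE ji].
  rewrite !mxE (bigD1 i) //= big1 => [|j /negbTE ji].
    by rewrite !mxE eqxx /= rmorph1 mul1r mulr1 !addr0.
  by rewrite !mxE ji /= rmorph0 mul0r.
by rewrite [delta_mx _ _ _ _]mxE ji mulr0.
Qed.

Lemma qf1_ge0 n (v : 'cV[C]_n) : 0 <= qf v 1%:M.
Proof.
rewrite -diag_const_mx qf_diag; apply: sumr_ge0 => i _.
by rewrite mxE mul1r mulrC mul_conjC_ge0.
Qed.

Lemma qf_diag_le n (w : 'cV[C]_n) (e : 'rV[C]_n) c :
  (forall i, e 0 i <= c) -> qf w (diag_mx e) <= c * qf w 1%:M.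
Proof.
move=> le_ec; rewrite -diag_const_mx !qf_diag mulr_sumr; apply: ler_sum => i _.
rewrite mxE mul1r; apply: ler_wpM2r => //.
by rewrite mulrC mul_conjC_ge0.
Qed.

End Hermitian.

Section PsdSpectral.
Variable R : realType.
Local Notation C := R[i].

Lemma psd_spectral n (P : 'M[C]_n) : psdmx P ->
  exists U (d : 'rV[C]_n), [/\ adjmx U *m U = 1%:M, U *m adjmx U = 1%:M,
    P = U *m diag_mx d *m adjmx U & forall i, 0 <= d 0 i].
Proof.
move=> [hP Ppos].
have hs : P \is hermsymmx.
  by apply/is_hermitianmxP; rewrite expr0 scale1r; exact: esym hP.
have /orthomx_spectralP PE := hermitian_normalmx hs.
have Qu : spectralmx P \is unitarymx := spectral_unitarymx P.
rewrite invmx_unitary // in PE.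
set Q := spectralmx P in PE Qu; pose U := adjmx Q.
have QE : Q = adjmx U by rewrite adjmxK.
have UU : adjmx U *m U = 1%:M by rewrite -QE; apply/unitarymxP.
have UU' : U *m adjmx U = 1%:M.
  rewrite -QE; have -> : U = invmx Q by rewrite invmx_unitary.
  by rewrite mulVmx // spectral_unit.
have {}PE : P = U *m diag_mx (spectral_diag P) *m adjmx U by rewrite /U adjmxK.
exists U, (spectral_diag P); split=> // i.
have := Ppos (U *m delta_mx i 0).
by rewrite -/(qf _ _) {1}PE qf_conjmx mulmxA UU mul1mx qf_delta mxE eqxx mulr1n.
Qed.

Lemma psd_top_eigen n (P : 'M[C]_n) : (0 < n)%N -> psdmx P ->
  exists (a : R) (u : 'cV[C]_n), [/\ 0 <= a, qf u 1%:M = 1, P *m u = a%:C *: u,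
    forall v, qf v P <= a%:C * qf v 1%:M &
    forall v, qf v (P *m P) <= (a * a)%:C * qf v 1%:M].
Proof.
move=> n_gt0 /psd_spectral[U [d [UU UU' PE d_ge0]]].
have dE i : d 0 i = (complex.Re (d 0 i))%:C by rewrite RRe_real // ger0_real.
have [m _ max_m] :=
  @arg_maxP _ R _ (Ordinal n_gt0) xpredT (fun i => complex.Re (d 0 i)) isT.
pose a := complex.Re (d 0 m).
have d_le i : d 0 i <= a%:C by rewrite dE lecR; exact: max_m.
pose u : 'cV[C]_n := U *m delta_mx m 0.
have Uu : adjmx U *m u = delta_mx m 0 by rewrite mulmxA UU mul1mx.
have qf1U v : qf v 1%:M = qf (adjmx U *m v) 1%:M.
  by rewrite -qf_conjmx mulmx1 UU'.
have PP : P *m P = U *m diag_mx (\row_j (d 0 j * d 0 j)) *m adjmx U.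
  by rewrite PE -!mulmxA (mulmxA (adjmx U) U) UU mul1mx !mulmxA -(mulmxA U) mulmx_diag.
exists a, u; split.
- by have := d_ge0 m; rewrite dE ler0c.
- by rewrite qf1U Uu qf_delta mxE eqxx.
- rewrite PE -!mulmxA (mulmxA (adjmx U)) UU mul1mx.
  have -> : diag_mx d *m (delta_mx m 0 : 'cV[C]_n) = d 0 m *: delta_mx m 0.
    apply/matrixP=> i j; rewrite mul_diag_mx !mxE.
    by case: (eqVneq i m) => [->|] //= _; rewrite !mulr0.
  by rewrite -scalemxAr -dE.
- by move=> v; rewrite PE qf_conjmx qf1U; exact: qf_diag_le.
- move=> v; rewrite PP qf_conjmx qf1U; apply: qf_diag_le => i.
  by rewrite mxE rmorphM ler_pM.
Qed.

Lemma vnorm_qf n (v : 'cV[C]_n) : vnorm v = Num.sqrt (complex.Re (qf v 1%:M)).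
Proof. by rewrite /qf mulmx1. Qed.

Lemma vnorm_herm n (P : 'M[C]_n) (v : 'cV[C]_n) : is_herm P ->
  vnorm (P *m v) = Num.sqrt (complex.Re (qf v (P *m P))).
Proof. by move=> hP; rewrite /vnorm /qf adjmxM hP !mulmxA. Qed.

Lemma opnorm_eigen n (P : 'M[C]_n) (a : R) (u : 'cV[C]_n) :
  is_herm P -> 0 <= a -> qf u 1%:M = 1 -> P *m u = a%:C *: u ->
  (forall v, qf v (P *m P) <= (a * a)%:C * qf v 1%:M) -> opnorm P = a.
Proof.
move=> hP a_ge0 u1 Pu PP_le.
have bounded v : vnorm v <= 1 -> vnorm (P *m v) <= a.
  rewrite vnorm_qf vnorm_herm // -[X in _ <= X -> _]sqrtr1 ler_sqrt // => v1.
  have := PP_le v; rewrite -(RRe_real (ger0_real (qf1_ge0 v))) -rmorphM.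
  rewrite lecE => /andP[_ /ler_wsqrtr/le_trans]; apply.
  rewrite -[X in _ <= X](@ger0_norm _ a) // -sqrtr_sqr ler_sqrt ?sqr_ge0 //.
  by rewrite expr2 ler_piMr // mulr_ge0.
have attained : vnorm u <= 1 /\ a = vnorm (P *m u).
  split; first by rewrite vnorm_qf u1 sqrtr1.
  have PPu : P *m P *m u = (a * a)%:C *: u.
    by rewrite -mulmxA Pu -scalemxAr Pu scalerA -rmorphM.
  by rewrite vnorm_herm // (qf_eigen PPu) u1 mulr1 -expr2 sqrtr_sqr ger0_norm.
apply: le_anti; rewrite ge_sup /=; last 2 first.
- by exists a, u.
- by move=> x [v [v1 ->]]; exact: bounded.
apply: (@sup_upper_bound _ _ _ a); last by exists u.
split; first by exists a, u.
by exists a => x [v [v1 ->]]; exact: bounded.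
Qed.

Lemma psd_opnorm_eigen n (P : 'M[C]_n) : (0 < n)%N -> psdmx P ->
  exists u : 'cV[C]_n, [/\ 0 <= opnorm P, qf u 1%:M = 1,
    P *m u = (opnorm P)%:C *: u & forall v, qf v P <= (opnorm P)%:C * qf v 1%:M].
Proof.
move=> n_gt0 psdP; have [a [u [a_ge0 u1 Pu P_le PP_le]]] := psd_top_eigen n_gt0 psdP.
by exists u; rewrite (opnorm_eigen (psd_herm psdP) a_ge0 u1 Pu PP_le).
Qed.

End PsdSpectral.

Section TwoByTwo.
Variable R : realType.
Local Notation C := R[i].

Definition diag2 (x y : C) : 'M[C]_2 :=
  diag_mx (\row_(i < 2) if i == ord0 then x else y).

Lemma diag2_herm x y : Num.conj x = x -> Num.conj y = y -> is_herm (diag2 x y).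
Proof.
move=> hx hy; apply/matrixP=> i j; rewrite !mxE.
have [->|ne] := eqVneq i j; first by rewrite !mulr1n; case: ifP.
by rewrite !mulr0n rmorph0.
Qed.

Lemma diag2_psd x y : 0 <= x -> 0 <= y -> psdmx (diag2 x y).
Proof.
move=> x0 y0; split; first by apply: diag2_herm; apply/CrealP; apply: ger0_real.
move=> v; rewrite -/(qf _ _) qf_diag; apply: sumr_ge0 => i _.
by rewrite mxE; apply: mulr_ge0; [case: ifP | rewrite mulrC mul_conjC_ge0].
Qed.

Lemma diag2_lin (a b : C) x y x' y' :
  diag2 (a * x + b * x') (a * y + b * y') = a *: diag2 x y + b *: diag2 x' y'.
Proof.
apply/matrixP=> i j; rewrite !mxE.
by case: (i == j); case: (i == ord0); rewrite ?mulr1n ?mulr0n ?mulr0 ?addr0.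
Qed.

Lemma diag2_1 : diag2 1 1 = 1%:M.
Proof.
rewrite /diag2 -diag_const_mx; congr diag_mx; apply/rowP=> i; rewrite !mxE.
by case: ifP.
Qed.

Lemma conj_realC (x : R) : Num.conj x%:C = x%:C :> C.
Proof. exact: conjc_real. Qed.

Lemma diag2_real_herm (a b : R) : is_herm (diag2 a%:C (- b%:C)).
Proof. by apply: diag2_herm; [|rewrite -rmorphN]; exact: conj_realC. Qed.

Lemma compress_PU n (u w : 'cV[C]_n) : qf u 1%:M = 1 -> qf w 1%:M = 1 ->
  is_PU (fun X => diag2 (qf u X) (qf w X)).
Proof.
move=> u1 w1; split.
- by move=> X hX; apply: diag2_herm; exact: qf_herm.
- by move=> x y X Y _ _; rewrite !qfD !qfZ diag2_lin.
- by move=> X [_ X_ge0]; apply: diag2_psd; [exact: X_ge0 | exact: X_ge0].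
- by rewrite u1 w1 diag2_1.
Qed.

Lemma expand_PU n (E F : 'M[C]_n) : psdmx E -> psdmx F -> E + F = 1%:M ->
  is_PU (fun Y : 'M[C]_2 => Y ord0 ord0 *: E + Y ord_max ord_max *: F).
Proof.
move=> [hE E_ge0] [hF F_ge0] EF.
have diag_real (Y : 'M[C]_2) i : is_herm Y -> Num.conj (Y i i) = Y i i.
  by move=> hY; rewrite -{2}hY !mxE.
have herm_img (Y : 'M[C]_2) : is_herm Y ->
    is_herm (Y ord0 ord0 *: E + Y ord_max ord_max *: F).
  by move=> hY; apply: hermD; apply: hermZ => //; exact: diag_real.
split.
- exact: herm_img.
- move=> x y X Y _ _; rewrite !mxE !scalerDl -!scalerA !scalerDr.
  exact: addrACA.
- move=> Y [hY Y_ge0]; split; first exact: herm_img.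
  have diag_ge0 i : 0 <= Y i i.
    by have := Y_ge0 (delta_mx i 0); rewrite -/(qf _ _) qf_delta.
  move=> v; rewrite -/(qf _ _) qfD !qfZ.
  by apply: addr_ge0; apply: mulr_ge0; rewrite ?diag_ge0 ?E_ge0 ?F_ge0.
- by rewrite !mxE !eqxx !mulr1n !scale1r.
Qed.

End TwoByTwo.

Section Resolution.
Variable R : realType.
Local Notation C := R[i].

Lemma eigen_annihilated p (P M : 'M[C]_p) (u : 'cV[C]_p) (a : R) :
  0 < a -> M *m P = 0 -> P *m u = a%:C *: u -> M *m u = 0.
Proof.
move=> a_gt0 MP Pu.
have : a%:C *: (M *m u) = 0 by rewrite scalemxAr -Pu mulmxA MP mul0mx.
by move/eqP; rewrite scaler_eq0 eq_complex /= eqxx andbT gt_eqF //= => /eqP.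
Qed.

Lemma affine_decomposition p (A : 'M[C]_p) (x y : C) : x + y != 0 ->
  let E := (x + y)^-1 *: (A + y *: 1%:M) in
  let F := (x + y)^-1 *: (- A + x *: 1%:M) in
  E + F = 1%:M /\ x *: E + (- y) *: F = A.
Proof.
move=> xy_neq0 E F.
have comb q r : q *: E + r *: F =
    (q - r) * (x + y)^-1 *: A + (x + y)^-1 * (q * y + r * x) *: 1%:M.
  rewrite /E /F !scalerA !scalerDr !scalerN !scalerA -!scaleNr addrACA.
  by rewrite -!scalerDl; congr (_ *: _ + _ *: _); ring.
split.
- have := comb 1 1; rewrite !scale1r => ->.
  have -> : (x + y)^-1 * (1 * y + 1 * x) = 1 by rewrite !mul1r [y + x]addrC mulVf.
  by rewrite subrr mul0r scale0r add0r scale1r.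
- rewrite comb; have -> : (x - - y) * (x + y)^-1 = 1 by rewrite opprK mulfV.
  have -> : (x + y)^-1 * (x * y + - y * x) = 0.
    by rewrite mulNr [y * x]mulrC subrr mulr0.
  by rewrite scale1r scale0r addr0.
Qed.

Lemma qf_shift_ge0 p (X P M : 'M[C]_p) (c : C) (v : 'cV[C]_p) :
  X = P - M -> psdmx P -> (forall v, qf v M <= c * qf v 1%:M) ->
  0 <= qf v (X + c *: 1%:M).
Proof.
move=> -> [_ P_ge0] M_le; rewrite qfD qfB qfZ -addrA.
by apply: addr_ge0; [exact: P_ge0 | rewrite addrC subr_ge0].
Qed.

Lemma psd_resolution p (A Ap Am : 'M[C]_p) (a b : R) : 0 < a -> 0 < b ->
  is_herm A -> A = Ap - Am -> psdmx Ap -> psdmx Am ->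
  (forall v, qf v Ap <= a%:C * qf v 1%:M) -> (forall v, qf v Am <= b%:C * qf v 1%:M) ->
  exists E F, [/\ psdmx E, psdmx F, E + F = 1%:M & a%:C *: E + (- b%:C) *: F = A].
Proof.
move=> a_gt0 b_gt0 hA AE psdAp psdAm Ap_le Am_le.
have ab_neq0 : a%:C + b%:C != 0 :> C.
  rewrite -rmorphD; apply/eqP => /complexI ab0.
  by move: (addr_gt0 a_gt0 b_gt0); rewrite ab0 ltxx.
have [EF AE'] := affine_decomposition A ab_neq0.
set s := (a%:C + b%:C)^-1 in EF AE'.
have sE : s = ((a + b)^-1)%:C by rewrite /s -rmorphD fmorphV.
have s_ge0 : 0 <= s by rewrite sE ler0c invr_ge0 addr_ge0 // ltW.
have s_real : Num.conj s = s by rewrite sE conj_realC.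
have h1 : is_herm (1%:M : 'M[C]_p) := @herm1 R p.
exists (s *: (A + b%:C *: 1%:M)), (s *: (- A + a%:C *: 1%:M)); split=> //.
- split; first exact: hermZ s_real (hermD hA (hermZ (conj_realC b) h1)).
  move=> v; rewrite -/(qf _ _) qfZ; apply: mulr_ge0; first exact: s_ge0.
  exact: qf_shift_ge0 v AE psdAp Am_le.
- split; first exact: hermZ s_real (hermD (hermN hA) (hermZ (conj_realC a) h1)).
  move=> v; rewrite -/(qf _ _) qfZ; apply: mulr_ge0; first exact: s_ge0.
  by apply: qf_shift_ge0 v _ psdAm Ap_le; rewrite AE opprB.
Qed.

End Resolution.

Section Reduction.
Variable R : realType.
Local Notation C := R[i].

Variables (mu : forall n : nat, 'M[C]_n -> R) (n : nat) (A Ap Am : 'M[C]_n).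
Arguments mu : clear implicits.
Hypotheses (muP : PU_monotone mu) (hA : is_herm A).
Hypotheses (not_psd : ~ psdmx A) (not_nsd : ~ psdmx (- A)).
Hypotheses (psdAp : psdmx Ap) (psdAm : psdmx Am).
Hypotheses (AE : A = Ap - Am) (ApAm : Ap *m Am = 0).

(* Every matrix of dimension 0 is PSD, so A lives in positive dimension. *)
Lemma dim_gt0 : (0 < n)%N.
Proof.
rewrite lt0n; apply/eqP => n0; apply: not_psd; split; first exact: hA.
move=> v; rewrite mxE big1; first exact: lexx.
move=> i _; suff : (i < 0)%N by rewrite ltn0.
by rewrite -n0.
Qed.

(* Both parts are nonzero, since A is neither positive nor negative. *)
Lemma opnorm_parts_gt0 : 0 < opnorm Ap /\ 0 < opnorm Am.
Proof.
have [_ [a_ge0 _ _ Ap_le]] := psd_opnorm_eigen dim_gt0 psdAp.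
have [_ [b_ge0 _ _ Am_le]] := psd_opnorm_eigen dim_gt0 psdAm.
have negAE : - A = Am - Ap by rewrite AE opprB.
split.
- rewrite lt0r a_ge0 andbT; apply/eqP => norm0.
  case: not_nsd; split; first exact: hermN.
  move=> v; have := qf_shift_ge0 v negAE psdAm Ap_le.
  by rewrite norm0 scale0r addr0.
- rewrite lt0r b_ge0 andbT; apply/eqP => norm0.
  case: not_psd; split; first exact: hA.
  move=> v; have := qf_shift_ge0 v AE psdAp Am_le.
  by rewrite norm0 scale0r addr0.
Qed.

Let D : 'M[C]_2 := diag2 (opnorm Ap)%:C (- (opnorm Am)%:C).

(* Compressing A to the top eigenvectors of A_+ and A_- yields D. *)
Lemma mu_diag2_le : mu 2 D <= mu n A.
Proof.
have [a_gt0 b_gt0] := opnorm_parts_gt0.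
have [u [_ u1 Apu _]] := psd_opnorm_eigen dim_gt0 psdAp.
have [w [_ w1 Amw _]] := psd_opnorm_eigen dim_gt0 psdAm.
have AmAp : Am *m Ap = 0.
  by rewrite -(psd_herm psdAm) -(psd_herm psdAp) -adjmxM ApAm adjmx0.
have Au : A *m u = (opnorm Ap)%:C *: u.
  by rewrite AE mulmxBl Apu (eigen_annihilated a_gt0 AmAp Apu) subr0.
have Aw : A *m w = (- (opnorm Am)%:C) *: w.
  by rewrite AE mulmxBl Amw (eigen_annihilated b_gt0 ApAm Amw) sub0r scaleNr.
have := @muP n 2 _ dim_gt0 isT (compress_PU u1 w1) A hA.
by rewrite (qf_eigen Au) (qf_eigen Aw) u1 w1 !mulr1.
Qed.

(* Conversely, A is the image of D under the expansion along a PSD resolution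
   of the identity. *)
Lemma mu_le_diag2 : mu n A <= mu 2 D.
Proof.
have [a_gt0 b_gt0] := opnorm_parts_gt0.
have [_ [_ _ _ Ap_le]] := psd_opnorm_eigen dim_gt0 psdAp.
have [_ [_ _ _ Am_le]] := psd_opnorm_eigen dim_gt0 psdAm.
have [E [F [psdE psdF EF AE']]] :=
  psd_resolution a_gt0 b_gt0 hA AE psdAp psdAm Ap_le Am_le.
have hD : is_herm D := diag2_real_herm _ _.
have := @muP 2 n _ isT dim_gt0 (expand_PU psdE psdF EF) D hD.
by rewrite /D !mxE !eqxx !mulr1n /= AE'.
Qed.

Lemma mu_reduce_diag2 : mu n A = mu 2 D.
Proof. by apply: le_anti; rewrite mu_le_diag2 mu_diag2_le. Qed.

End Reduction.

Unset Implicit Arguments.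

Theorem mainTheorem9 (R : realType) (mu : forall n : nat, 'M[R[i]]_n -> R)
  (n k : nat) (A Ap Am : 'M[R[i]]_n) (B Bp Bm : 'M[R[i]]_k) :
  PU_monotone mu ->
  is_herm A -> is_herm B ->
  ~ psdmx A -> ~ psdmx (- A) -> ~ psdmx B -> ~ psdmx (- B) ->
  psdmx Ap -> psdmx Am -> A = Ap - Am -> Ap *m Am = 0 ->
  psdmx Bp -> psdmx Bm -> B = Bp - Bm -> Bp *m Bm = 0 ->
  opnorm Ap = opnorm Bp -> opnorm Am = opnorm Bm ->
  mu n A = mu k B.
Proof.
move=> muP hA hB nA nNA nB nNB pAp pAm AE ApAm pBp pBm BE BpBm normP normM.
rewrite (mu_reduce_diag2 muP hA nA nNA pAp pAm AE ApAm).
by rewrite (mu_reduce_diag2 muP hB nB nNB pBp pBm BE BpBm) normP normM.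
Qed.
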